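(* Let $\eta,\delta\in(0,1)$ and let $G$ be a graph on $n$ vertices whose matrix $\mathbf{G}$ is positive semidefinite. Let $\mathrm{val}_{\mathbf{G}}(\delta)=\max_{\|x\|_2=1,\|x\|_0\le\delta n}x^{\intercal}\mathbf{G}x$. If some $S\subset V$ with $|S|=\delta n$ has $\Phi_G(S)\le\eta$, then $\mathrm{val}_{\mathbf{G}}(\delta)\ge 1-\eta$. If every $S\subset V$ with $|S|\le 2\delta n$ has $\Phi_G(S)\ge 1-\eta$, then $\mathrm{val}_{\mathbf{G}}(\delta)\le\sqrt{1-(1-\eta)^2}$.
   Context: A (edge-weighted, 1-regular) graph $G$ on vertex set $V$ with $|V|=n$ is given by a symmetric matrix $\mathbf{G}$ with nonnegative entries whose rows all sum to $1$. For $S\subset V$, $\Phi_G(S)=\frac{1}{|S|}\sum_{i\in S,j\notin S}\mathbf{G}_{ij}$. $\|x\|_0$ is the number of nonzero entries of $x$. *)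

From HB Require Import structures.
From mathcomp Require Import all_boot all_order all_algebra.
From mathcomp Require Import classical_sets reals.
Set Implicit Arguments. Unset Strict Implicit. Unset Printing Implicit Defensive.
Import Order.TTheory GRing.Theory Num.Theory.
Local Open Scope ring_scope.

Section Defs.
Variable R : realType.

(* A (edge-weighted, 1-regular) graph on n vertices: symmetric matrix with
   nonnegative entries whose rows sum to 1. *)
Definition is_graph_matrix (n : nat) (G : 'M[R]_n) : Prop :=
  G^T = G /\ (forall i j, 0 <= G i j) /\ (forall i, \sum_j G i j = 1).

Definition psd (n : nat) (G : 'M[R]_n) : Prop :=
  forall x : 'cV[R]_n, 0 <= (x^T *m G *m x) 0 0.

Definition qform (n : nat) (G : 'M[R]_n) (x : 'cV[R]_n) : R := (x^T *m G *m x) 0 0.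

Definition norm2sq (n : nat) (x : 'cV[R]_n) : R := \sum_i x i 0 ^+ 2.
Definition l0 (n : nat) (x : 'cV[R]_n) : nat := #|[set i | x i 0 != 0]|.

Definition Phi (n : nat) (G : 'M[R]_n) (S : {set 'I_n}) : R :=
  (#|S|%:R)^-1 * \sum_(i in S) \sum_(j in ~: S) G i j.

Definition valG (n : nat) (G : 'M[R]_n) (delta : R) : R :=
  reals.sup [set qform G x | x in
     [set x : 'cV[R]_n | norm2sq x = 1 /\ (l0 x)%:R <= delta * n%:R]]%classic.
End Defs.

From mathcomp Require Import all_boot all_order all_algebra.
From mathcomp Require Import ring lra.
From mathcomp Require classical_sets.
From mathcomp Require Import reals.

(* The lower bound is witnessed by the normalised indicator of S, whose
   Rayleigh quotient is 1 - Phi(S).  For the upper bound take an admissible x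
   and v = |x|.  Every level set of v^2 lies in the support of x, hence is small
   and expands by at least 1 - eta; the co-area formula then gives
   sum_ij G_ij (v_i^2 - v_j^2)_+ >= 1 - eta.  Factoring
   v_i^2 - v_j^2 = (v_i - v_j)(v_i + v_j) and applying Cauchy-Schwarz, the two
   factors have weighted energies 1 - x^T G x and at most 1 + x^T G x, so
   (1 - eta)^2 <= 1 - (x^T G x)^2. *)

Set Implicit Arguments.
Unset Strict Implicit.
Unset Printing Implicit Defensive.

Import Order.TTheory GRing.Theory Num.Theory.
Local Open Scope ring_scope.

Lemma weighted_CauchySchwarz (R : realFieldType) (I : finType) (w a b : I -> R) :
  (forall k, 0 <= w k) ->
  (\sum_k w k * (a k * b k)) ^+ 2 <=
    (\sum_k w k * a k ^+ 2) * (\sum_k w k * b k ^+ 2).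
Proof.
move=> w_ge0; set A := \sum_k w k * a k ^+ 2; set B := \sum_k w k * b k ^+ 2.
set C := \sum_k w k * (a k * b k).
have Lagrange : 2 * (A * B - C ^+ 2) =
    \sum_k \sum_l w k * w l * (a k * b l - a l * b k) ^+ 2.
  have -> : 2 * (A * B - C ^+ 2) = A * B + B * A - 2 * (C * C) by ring.
  rewrite !big_distrlr -big_split big_distrr -sumrB; apply: eq_bigr => k _.
  rewrite -big_split big_distrr -sumrB; apply: eq_bigr => l _ /=; ring.
rewrite -subr_ge0 -(pmulr_rge0 _ (ltr0Sn _ 1)) Lagrange.
by apply: sumr_ge0 => k _; apply: sumr_ge0 => l _; rewrite mulr_ge0 ?sqr_ge0 ?mulr_ge0.
Qed.

Lemma sum_indicator (R : pzSemiRingType) (I : finType) (S : {set I}) :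
  \sum_i (i \in S)%:R = #|S|%:R :> R.
Proof.
rewrite -sum1_card natr_sum [RHS]big_mkcond /=.
by apply: eq_bigr => i _; case: (i \in S).
Qed.

Lemma peel_min_level (R : realDomainType) (I : finType) (y : I -> R) (i0 : I) :
  (forall i, 0 <= y i) -> y i0 != 0 ->
  exists m (z : I -> R), [/\ 0 <= m, forall i, 0 <= z i,
    forall i, y i = z i + m * (i \in [set i | y i != 0])%:R &
    [set i | z i != 0] \proper [set i | y i != 0]].
Proof.
set T := [set i | y i != 0] => y_ge0 yi0.
have Ti0 : i0 \in T by rewrite inE.
have [i1 Ti1 i1_min] := @arg_minP _ R _ i0 (mem T) y Ti0.
have {}Ti1 : i1 \in T := Ti1.
exists (y i1), (fun i => y i - y i1 * (i \in T)%:R); split => [||i|].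
- exact: y_ge0.
- move=> i; case: (boolP (i \in T)) => Ti /=; last by rewrite mulr0 subr0.
  by rewrite mulr1 subr_ge0 i1_min.
- by rewrite subrK.
apply/properP; split; last by exists i1; rewrite // inE Ti1 mulr1 subrr eqxx.
apply/subsetP => i; rewrite inE; apply: contraNT => Ti.
by rewrite (negPf Ti) mulr0 subr0; move: Ti; rewrite inE negbK.
Qed.

Section GraphQuadraticForm.
Variables (R : realType) (n : nat) (G : 'M[R]_n).
Hypothesis graphG : is_graph_matrix G.

Let G_sym i j : G i j = G j i.
Proof. by case: graphG => [GT _]; rewrite -{1}GT mxE. Qed.

Let G_ge0 i j : 0 <= G i j.
Proof. by case: graphG => [_ []]. Qed.

Let G_rowsum i : \sum_j G i j = 1.
Proof. by case: graphG => [_ []]. Qed.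

Definition edge_sum (f : 'I_n -> 'I_n -> R) : R := \sum_i \sum_j G i j * f i j.

Lemma eq_edge_sum f g : (forall i j, f i j = g i j) -> edge_sum f = edge_sum g.
Proof. by move=> fg; apply: eq_bigr => i _; apply: eq_bigr => j _; rewrite fg. Qed.

Lemma ler_edge_sum f g : (forall i j, f i j <= g i j) -> edge_sum f <= edge_sum g.
Proof.
move=> fg; apply: ler_sum => i _; apply: ler_sum => j _.
exact: ler_wpM2l.
Qed.

Lemma edge_sum_ge0 f : (forall i j, 0 <= f i j) -> 0 <= edge_sum f.
Proof.
by move=> f_ge0; apply: sumr_ge0 => i _; apply: sumr_ge0 => j _; exact: mulr_ge0.
Qed.

Lemma edge_sumD f g :
  edge_sum (fun i j => f i j + g i j) = edge_sum f + edge_sum g.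
Proof.
rewrite -big_split; apply: eq_bigr => i _.
by rewrite -big_split; apply: eq_bigr => j _; rewrite mulrDr.
Qed.

Lemma edge_sumZ c f : edge_sum (fun i j => c * f i j) = c * edge_sum f.
Proof.
rewrite big_distrr; apply: eq_bigr => i _.
by rewrite big_distrr; apply: eq_bigr => j _; rewrite mulrCA.
Qed.

Lemma edge_sum_transpose f : edge_sum (fun i j => f j i) = edge_sum f.
Proof.
rewrite /edge_sum exchange_big; apply: eq_bigr => i _.
by apply: eq_bigr => j _; rewrite G_sym.
Qed.

Lemma edge_sum_row v : edge_sum (fun i _ => v i) = \sum_i v i.
Proof. by apply: eq_bigr => i _; rewrite -big_distrl /= G_rowsum mul1r. Qed.

Lemma edge_sum_symmetrize f :
  2 * edge_sum f = edge_sum (fun i j => f i j + f j i).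
Proof. by rewrite edge_sumD edge_sum_transpose mulr_natl mulr2n. Qed.

Lemma edge_sum_CauchySchwarz a b :
  edge_sum (fun i j => a i j * b i j) ^+ 2 <=
    edge_sum (fun i j => a i j ^+ 2) * edge_sum (fun i j => b i j ^+ 2).
Proof.
rewrite /edge_sum !pair_bigA /=.
by apply: weighted_CauchySchwarz => -[i j].
Qed.

Definition quad (v : 'I_n -> R) : R := edge_sum (fun i j => v i * v j).

Lemma qformE (x : 'cV[R]_n) : qform G x = quad (fun i => x i 0).
Proof.
rewrite /qform /quad /edge_sum !mxE exchange_big /=; apply: eq_bigr => j _.
rewrite !mxE big_distrl /=; apply: eq_bigr => i _.
by rewrite !mxE mulrA (mulrC (x i 0)).
Qed.

Lemma edge_sum_sqr_sym v :
  edge_sum (fun i j => v i ^+ 2 + v j ^+ 2) = 2 * \sum_i v i ^+ 2.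
Proof. by rewrite -(edge_sum_row (fun i => v i ^+ 2)) edge_sum_symmetrize. Qed.

Lemma edge_sum_sqrB v :
  edge_sum (fun i j => (v i - v j) ^+ 2) = 2 * (\sum_i v i ^+ 2 - quad v).
Proof.
rewrite (@eq_edge_sum _ (fun i j => (v i ^+ 2 + v j ^+ 2) + (-2) * (v i * v j)));
  last by move=> i j; ring.
by rewrite edge_sumD edge_sumZ edge_sum_sqr_sym -/(quad v); ring.
Qed.

Lemma edge_sum_sqrD v :
  edge_sum (fun i j => (v i + v j) ^+ 2) = 2 * (\sum_i v i ^+ 2 + quad v).
Proof.
rewrite (@eq_edge_sum _ (fun i j => (v i ^+ 2 + v j ^+ 2) + 2 * (v i * v j)));
  last by move=> i j; ring.
by rewrite edge_sumD edge_sumZ edge_sum_sqr_sym -/(quad v); ring.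
Qed.

Lemma quad_le_sum_sqr v : quad v <= \sum_i v i ^+ 2.
Proof.
have : 0 <= edge_sum (fun i j => (v i - v j) ^+ 2).
  by apply: edge_sum_ge0 => i j; exact: sqr_ge0.
by rewrite edge_sum_sqrB pmulr_rge0 // subr_ge0.
Qed.

Lemma quad_le_normr v : quad v <= quad (fun i => `|v i|).
Proof. by apply: ler_edge_sum => i j; rewrite -normrM ler_norm. Qed.

Definition cut (S : {set 'I_n}) : R := \sum_(i in S) \sum_(j in ~: S) G i j.

Lemma cut_edge_sum (S : {set 'I_n}) :
  cut S = edge_sum (fun i j => ((i \in S) && (j \notin S))%:R).
Proof.
rewrite /cut big_mkcond; apply: eq_bigr => i _.
case: (i \in S); last by rewrite big1 // => j _; rewrite mulr0.
rewrite big_mkcond; apply: eq_bigr => j _.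
by rewrite inE /=; case: (j \in S); rewrite ?mulr1 ?mulr0.
Qed.

Lemma cut_Phi (S : {set 'I_n}) : S != set0 -> cut S = Phi G S * #|S|%:R.
Proof.
move=> S0; rewrite /Phi mulrAC mulVf ?mul1r //.
by rewrite pnatr_eq0 -lt0n card_gt0.
Qed.

Lemma quad_indicator (S : {set 'I_n}) : quad (fun i => (i \in S)%:R) = #|S|%:R - cut S.
Proof.
have -> : #|S|%:R = edge_sum (fun i _ => (i \in S)%:R) :> R.
  by rewrite edge_sum_row sum_indicator.
rewrite cut_edge_sum -mulN1r -edge_sumZ -edge_sumD.
by apply: eq_edge_sum => i j; case: (i \in S); case: (j \in S); rewrite /= ?mulr0; ring.
Qed.

Lemma eq_quad v w : (forall i, v i = w i) -> quad v = quad w.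
Proof. by move=> vw; apply: eq_edge_sum => i j; rewrite !vw. Qed.

Lemma quadZ c v : quad (fun i => c * v i) = c ^+ 2 * quad v.
Proof. by rewrite -edge_sumZ; apply: eq_edge_sum => i j; ring. Qed.

Definition pos_variation (y : 'I_n -> R) : R :=
  edge_sum (fun i j => Num.max (y i - y j) 0).

Lemma pos_variation_ge0 y : 0 <= pos_variation y.
Proof. by apply: edge_sum_ge0 => i j; rewrite le_max lexx orbT. Qed.

Lemma pos_variation_add_indicator m (T : {set 'I_n}) y :
  0 <= m -> (forall i, 0 <= y i) -> (forall i, i \notin T -> y i = 0) ->
  pos_variation (fun i => y i + m * (i \in T)%:R) = m * cut T + pos_variation y.
Proof.
move=> m_ge0 y_ge0 yT; rewrite cut_edge_sum -edge_sumZ -edge_sumD.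
apply: eq_edge_sum => i j; have yi := y_ge0 i; have yj := y_ge0 j.
case: (boolP (i \in T)) => iT; case: (boolP (j \in T)) => jT /=.
- by rewrite mulr0 add0r; congr (Num.max _ _); ring.
- by rewrite (yT j jT) mulr1 mulr0 !addr0 !subr0 !max_l //; lra.
- by rewrite (yT i iT) mulr0 mulr1 !add0r !max_r //; lra.
- by rewrite !mulr0 !addr0 add0r.
Qed.

Lemma coarea_le_pos_variation c (U : {set 'I_n}) :
  (forall S : {set 'I_n}, S != set0 -> S \subset U -> c * #|S|%:R <= cut S) ->
  forall y, (forall i, 0 <= y i) -> (forall i, y i != 0 -> i \in U) ->
  c * \sum_i y i <= pos_variation y.
Proof.
move=> expandU y; have [k] := ubnP #|[set i | y i != 0]|.
elim: k y => // k IH y; rewrite ltnS => supp_y y_ge0 y_U.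
have [y0|/forallPn[i0 yi0]] := boolP [forall i, y i == 0].
  by rewrite big1 ?mulr0 ?pos_variation_ge0 // => i _; apply/eqP/(forallP y0).
have [m [z [m_ge0 z_ge0 y_eq z_supp]]] := peel_min_level y_ge0 yi0.
set T := [set i | y i != 0] in y_eq z_supp.
have z_T i : i \notin T -> z i = 0.
  move=> Ti; move: (y_eq i); rewrite (negPf Ti) mulr0 addr0 => <-.
  by move: Ti; rewrite inE negbK => /eqP.
have z_U i : z i != 0 -> i \in U.
  move=> zi; have : i \in T by apply: (subsetP (proper_sub z_supp)); rewrite inE.
  by rewrite inE => /y_U.
have IHz := IH z (leq_trans (proper_card z_supp) supp_y) z_ge0 z_U.
have -> : \sum_i y i = \sum_i z i + m * #|T|%:R.
  by rewrite (eq_bigr _ (fun i _ => y_eq i)) big_split /= -big_distrr /= sum_indicator.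
have -> : pos_variation y = m * cut T + pos_variation z.
  rewrite -pos_variation_add_indicator //; apply: eq_edge_sum => i j; by rewrite -!y_eq.
rewrite mulrDr addrC lerD // mulrCA ler_wpM2l // expandU //.
- by apply/set0Pn; exists i0; rewrite inE.
- by apply/subsetP => i; rewrite inE => /y_U.
Qed.

Lemma quad_sqr_add_pos_variation_sqr v : (forall i, 0 <= v i) ->
  quad v ^+ 2 + pos_variation (fun i => v i ^+ 2) ^+ 2 <= (\sum_i v i ^+ 2) ^+ 2.
Proof.
move=> v_ge0; set N := \sum_i _; set Q := quad v.
pose P i j := Num.max (v i - v j) 0.
(* Charging v_i + v_j to one orientation only gives B_ij^2 + B_ji^2 <= (v_i + v_j)^2,
   which saves the factor 2 in the final bound. *)
pose B i j := if v j < v i then v i + v j else 0.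
have two_gt0 : 0 < 2 :> R by [].
have PB : pos_variation (fun i => v i ^+ 2) = edge_sum (fun i j => P i j * B i j).
  apply: eq_edge_sum => i j; rewrite /P /B; have vi := v_ge0 i; have vj := v_ge0 j.
  case: ltP => vji; first by rewrite !max_l; [ring | lra | nra].
  by rewrite mulr0 max_r //; nra.
have P2 : edge_sum (fun i j => P i j ^+ 2) = N - Q.
  apply: (mulfI (lt0r_neq0 two_gt0)); rewrite edge_sum_symmetrize -edge_sum_sqrB.
  apply: eq_edge_sum => i j; rewrite /P.
  case: (leP (v j) (v i)) => vji.
    by rewrite (max_l (x := v i - v j)) ?(max_r (x := v j - v i)); [ring | lra | lra].
  by rewrite (max_r (x := v i - v j)) ?(max_l (x := v j - v i)); [ring | lra | lra].
have B2 : edge_sum (fun i j => B i j ^+ 2) <= N + Q.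
  rewrite -(ler_pM2l two_gt0) edge_sum_symmetrize -edge_sum_sqrD.
  apply: ler_edge_sum => i j; rewrite /B; have vi := v_ge0 i; have vj := v_ge0 j.
  case: ltP => vji; case: ltP => vij; rewrite ?expr0n /= ?addr0 ?add0r; nra.
have P2_ge0 : 0 <= N - Q by rewrite -P2; apply: edge_sum_ge0 => i j; exact: sqr_ge0.
have := edge_sum_CauchySchwarz P B; rewrite -PB P2 => CS.
have := ler_wpM2l P2_ge0 B2; nra.
Qed.

End GraphQuadraticForm.

Lemma valG_le (R : realType) n (G : 'M[R]_n) delta b : 0 <= b ->
  (forall x : 'cV[R]_n, norm2sq x = 1 -> (l0 x)%:R <= delta * n%:R -> qform G x <= b) ->
  valG G delta <= b.
Proof.
move=> b_ge0 qform_le; rewrite /valG; set E := classical_sets.image _ _.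
have [E0|/classical_sets.nonemptyPn ->] := boolp.pselect (classical_sets.nonempty E).
  by apply: ge_sup => // _ [x [x1 x_supp] <-]; exact: qform_le.
by rewrite sup0.
Qed.

Section SparseValue.
Variables (R : realType) (n : nat) (G : 'M[R]_n).
Hypothesis graphG : is_graph_matrix G.

Lemma valG_ge delta (x : 'cV[R]_n) :
  norm2sq x = 1 -> (l0 x)%:R <= delta * n%:R -> qform G x <= valG G delta.
Proof.
move=> x1 x_supp; apply: ub_le_sup; last by exists x.
exists 1 => _ [y [y1 _] <-].
by rewrite qformE -y1; exact: quad_le_sum_sqr.
Qed.

Lemma valG_ge_expansion delta (S : {set 'I_n}) :
  S != set0 -> #|S|%:R <= delta * n%:R -> 1 - Phi G S <= valG G delta.
Proof.
move=> S0 cardS; have S_gt0 : 0 < #|S|%:R :> R by rewrite ltr0n card_gt0.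
pose r := (Num.sqrt (#|S|%:R : R))^-1.
have r2 : r ^+ 2 * #|S|%:R = 1 by rewrite exprVn sqr_sqrtr ?mulVf ?gt_eqF ?ltW.
have r_neq0 : r != 0 by rewrite invr_eq0 sqrtr_eq0 -ltNge.
pose x : 'cV[R]_n := \col_i (r * (i \in S)%:R).
have -> : 1 - Phi G S = qform G x.
  rewrite qformE (eq_quad G (w := fun i => r * (i \in S)%:R)) => [|i]; last by rewrite mxE.
  rewrite quadZ quad_indicator // cut_Phi //.
  by rewrite -{1}[#|S|%:R]mul1r -mulrBl mulrCA r2 mulr1.
apply: valG_ge.
  rewrite /norm2sq -r2 -sum_indicator big_distrr /=; apply: eq_bigr => i _.
  by rewrite mxE exprMn; case: (i \in S); rewrite /= ?expr1n ?expr0n.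
suff -> : l0 x = #|S| by [].
rewrite /l0; apply: eq_card => i; rewrite inE mxE mulf_eq0 (negbTE r_neq0) /=.
by case: (i \in S); rewrite /= ?oner_eq0 ?eqxx.
Qed.

Lemma valG_le_expansion delta c : 0 <= c ->
  (forall S : {set 'I_n}, S != set0 -> #|S|%:R <= delta * n%:R -> c <= Phi G S) ->
  valG G delta <= Num.sqrt (1 - c ^+ 2).
Proof.
move=> c_ge0 expansion; apply: valG_le => [|x x1 x_supp]; first exact: sqrtr_ge0.
pose v i := `|x i 0|.
have v1 : \sum_i v i ^+ 2 = 1.
  by rewrite -x1; apply: eq_bigr => i _; rewrite real_normK ?num_real.
have c_le : c <= pos_variation G (fun i => v i ^+ 2).
  rewrite -[c]mulr1 -v1; apply: (coarea_le_pos_variation graphG (U := [set i | x i 0 != 0])).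
  - move=> S S0 SU; rewrite cut_Phi // ler_wpM2r //; apply: expansion => //.
    by apply: le_trans x_supp; rewrite ler_nat; exact: subset_leq_card.
  - by move=> i; exact: sqr_ge0.
  - by move=> i; rewrite inE; apply: contraNN => /eqP xi0; rewrite /v xi0 normr0 expr0n.
have cheeger : quad G v ^+ 2 + pos_variation G (fun i => v i ^+ 2) ^+ 2 <= 1.
  apply: le_trans (quad_sqr_add_pos_variation_sqr graphG _) _ => [i|].
    exact: normr_ge0.
  by rewrite v1 expr1n.
rewrite qformE; apply: le_trans (quad_le_normr graphG _) _.
apply: le_trans (ler_norm _) _; rewrite -sqrtr_sqr ler_sqrt; nra.
Qed.

End SparseValue.

Theorem theorem4 (R : realType) (n : nat) (G : 'M[R]_n) (eta delta : R) :
  0 < eta < 1 -> 0 < delta < 1 ->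
  is_graph_matrix G -> psd G ->
  ((exists S : {set 'I_n}, S != set0 /\ (#|S|%:R = delta * n%:R :> R) /\ Phi G S <= eta) ->
     1 - eta <= valG G delta)
  /\
  ((forall S : {set 'I_n}, S != set0 -> (#|S|%:R <= 2 * delta * n%:R :> R) ->
       1 - eta <= Phi G S) ->
     valG G delta <= Num.sqrt (1 - (1 - eta) ^+ 2)).
Proof.
move=> /andP[eta_gt0 eta_lt1] /andP[delta_gt0 _] graphG _; split.
  case=> S [S0 [cardS PhiS]].
  by apply: le_trans (valG_ge_expansion graphG S0 _); [lra | rewrite cardS].
move=> expansion; apply: (valG_le_expansion graphG) => [|S S0 cardS]; first lra.
apply: expansion => //; rewrite -mulrA.
have : 0 <= delta * n%:R by rewrite mulr_ge0 ?ler0n ?ltW.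
lra.
Qed.
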